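(* There is $C>0$ (depending only on $R$) such that for all $\varepsilon\in(0,1]$, $$\langle\hat h_\varepsilon,-\Delta_{S^2}\hat h_\varepsilon\rangle_{L^2(S^2)}\le C\varepsilon .$$
   Context: Setup: fix $R>0$, $\tau=0$. $\hat h_\varepsilon(w)=\tilde h_\varepsilon(\varepsilon w)$, where $\tilde h_\varepsilon=h_\varepsilon-\log|\frac{z-\varepsilon}{z+\varepsilon}|^2$ and $h_\varepsilon=\log|u|^2$ for the gauged $\mathbb{P}^1$ vortex-antivortex pair on the round sphere $S^2_R$ (metric $\frac{4R^2}{(1+|z|^2)^2}dzd\bar z$) with vortex at $z=\varepsilon$, antivortex at $z=-\varepsilon$; $\hat h_\varepsilon$ is a smooth function on $S^2$ satisfying $-\Delta_{S^2}\hat h+2R^2\varepsilon^2f_\varepsilon(w)^2F(w,\hat h)=0$ with $f_\varepsilon(w)=\frac{1+|w|^2}{1+\varepsilon^2|w|^2}$ and $F(w,v)=\frac{|w-1|^2e^v-|w+1|^2}{|w-1|^2e^v+|w+1|^2}$. Here $S^2$ is the unit round sphere in the stereographic coordinate $w$ (area form $\frac{4\,d^2w}{(1+|w|^2)^2}$) and $\Delta_{S^2}=\frac{(1+|w|^2)^2}{4}\nabla^2_w$ is its (negative semidefinite) Laplacian. *)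

From Stdlib Require Import Reals.
Open Scope R_scope.

(* Functions on S^2 are written in the stereographic coordinate w = x + i y,
   i.e. as functions R -> R -> R. *)

Definition cont2 (f : R -> R -> R) : Prop :=
  forall x y eps, 0 < eps -> exists d, 0 < d /\
    forall x' y', Rabs (x' - x) < d -> Rabs (y' - y) < d ->
      Rabs (f x' y' - f x y) < eps.

Fixpoint Ck (k : nat) (f : R -> R -> R) : Prop :=
  match k with
  | O => cont2 f
  | S k' => cont2 f /\ exists fx fy : R -> R -> R,
      (forall x y, derivable_pt_lim (fun t => f t y) x (fx x y)) /\
      (forall x y, derivable_pt_lim (fun t => f x t) y (fy x y)) /\
      Ck k' fx /\ Ck k' fy
  end.

Definition smooth2 (f : R -> R -> R) : Prop := forall k, Ck k f.

(* smooth function on S^2: smooth in the chart w and in the chart 1/w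
   (i.e. h(1/w) extends smoothly across w = 0 (the point at infinity)). *)
Definition smooth_on_S2 (h : R -> R -> R) : Prop :=
  smooth2 h /\
  exists g : R -> R -> R, smooth2 g /\
    forall u v, (u <> 0 \/ v <> 0) ->
      g u v = h (u / (u ^ 2 + v ^ 2)) (- v / (u ^ 2 + v ^ 2)).

Definition is_flat_laplacian (f L : R -> R -> R) : Prop :=
  exists fx fy : R -> R -> R,
    (forall x y, derivable_pt_lim (fun t => f t y) x (fx x y)) /\
    (forall x y, derivable_pt_lim (fun t => f x t) y (fy x y)) /\
    forall x y, exists a b,
      derivable_pt_lim (fun t => fx t y) x a /\
      derivable_pt_lim (fun t => fy x t) y b /\
      L x y = a + b.

(* Delta_{S^2} = (1+|w|^2)^2/4 * nabla_w^2 *)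
Definition lapS2 (L : R -> R -> R) (x y : R) : R :=
  (1 + x ^ 2 + y ^ 2) ^ 2 / 4 * L x y.

Definition areaS2 (x y : R) : R := 4 / (1 + x ^ 2 + y ^ 2) ^ 2.

Definition f_eps (eps x y : R) : R :=
  (1 + (x ^ 2 + y ^ 2)) / (1 + eps ^ 2 * (x ^ 2 + y ^ 2)).

Definition Fwv (x y v : R) : R :=
  (((x - 1) ^ 2 + y ^ 2) * exp v - ((x + 1) ^ 2 + y ^ 2)) /
  (((x - 1) ^ 2 + y ^ 2) * exp v + ((x + 1) ^ 2 + y ^ 2)).

(* the vortex-antivortex equation for hat h_eps (tau = 0):
   -Delta_{S^2} h + 2 R^2 eps^2 f_eps^2 F(w,h) = 0 *)
Definition hat_h_equation (Rad eps : R) (h L : R -> R -> R) : Prop :=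
  forall x y, - lapS2 L x y + 2 * Rad ^ 2 * eps ^ 2 * (f_eps eps x y) ^ 2
                * Fwv x y (h x y) = 0.

Definition square_integral (f : R -> R -> R) (r I : R) : Prop :=
  exists G : R -> R,
    (forall x, -r <= x <= r ->
       exists pr : Riemann_integrable (f x) (- r) r, RiemannInt pr = G x) /\
    exists pr : Riemann_integrable G (- r) r, RiemannInt pr = I.

Definition plane_integral (f : R -> R -> R) (I : R) : Prop :=
  forall e, 0 < e -> exists r0, 0 < r0 /\ forall r, r0 <= r ->
    exists Ir, square_integral f r Ir /\ Rabs (Ir - I) < e.

(* < h, -Delta_{S^2} h >_{L^2(S^2)} = I, written in the chart w with the
   round area form 4 d^2w/(1+|w|^2)^2 (the point at infinity has measure 0) *)
Definition L2S2_pairing_minus_lap (h L : R -> R -> R) (I : R) : Prop :=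
  plane_integral (fun x y => h x y * (- lapS2 L x y) * areaS2 x y) I.

From Stdlib Require Import Reals Lra Lia Psatz Classical FunctionalExtensionality.
From Coquelicot Require Import Coquelicot.
Open Scope R_scope.

(* By the vortex equation the pairing density is [8 R^2 eps^2 (- F v) v] against the
   weight [(1 + eps^2 |w|^2)^-2], where [v = hat h] is bounded by some [M] because the
   sphere is compact.  Far from the vortices [(- F v) v = O (x^2 / (1 + |w|^2)^2)], whose
   weighted integral is [O (1 / eps)]; near them [(- F v) v] is at most the logarithm of
   the ratio of the distances to [1] and [-1], which is integrable uniformly in [M].
   Hence the pairing is [O (eps^2 / eps) = O (eps)]. *)

Definition continuous2 (f : R -> R -> R) : Prop :=
  forall x y, continuity_2d_pt f x y.

Lemma cont2_continuous2 f : cont2 f -> continuous2 f.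
Proof.
  intros Hf x y eps. destruct (Hf x y eps (cond_pos eps)) as [d [Hd Hf']].
  exists (mkposreal d Hd). intros u v Hu Hv. exact (Hf' u v Hu Hv).
Qed.

Lemma continuous2_const c : continuous2 (fun _ _ => c).
Proof. intros x y. apply continuity_2d_pt_const. Qed.

Lemma continuous2_fst : continuous2 (fun x _ => x).
Proof. intros x y. apply continuity_2d_pt_id1. Qed.

Lemma continuous2_snd : continuous2 (fun _ y => y).
Proof. intros x y. apply continuity_2d_pt_id2. Qed.

Lemma continuous2_plus f g :
  continuous2 f -> continuous2 g -> continuous2 (fun x y => f x y + g x y).
Proof. intros Hf Hg x y. apply continuity_2d_pt_plus; auto. Qed.

Lemma continuous2_minus f g :
  continuous2 f -> continuous2 g -> continuous2 (fun x y => f x y - g x y).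
Proof. intros Hf Hg x y. apply continuity_2d_pt_minus; auto. Qed.

Lemma continuous2_mult f g :
  continuous2 f -> continuous2 g -> continuous2 (fun x y => f x y * g x y).
Proof. intros Hf Hg x y. apply continuity_2d_pt_mult; auto. Qed.

Lemma continuous2_scal k f : continuous2 f -> continuous2 (fun x y => k * f x y).
Proof. intros Hf. apply continuous2_mult; [apply continuous2_const | exact Hf]. Qed.

Lemma continuous2_inv f :
  continuous2 f -> (forall x y, f x y <> 0) -> continuous2 (fun x y => / f x y).
Proof. intros Hf Hf0 x y. apply continuity_2d_pt_inv; auto. Qed.

Lemma continuous2_comp (g : R -> R) f :
  (forall t, continuity_pt g t) -> continuous2 f -> continuous2 (fun x y => g (f x y)).
Proof. intros Hg Hf x y. apply continuity_1d_2d_pt_comp; auto. Qed.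

Lemma continuous2_pow2 f : continuous2 f -> continuous2 (fun x y => f x y ^ 2).
Proof.
  intros Hf. apply (continuous2_comp (fun t => t ^ 2)); auto.
  intros t. apply derivable_continuous_pt, derivable_pt_pow.
Qed.

Lemma continuous2_tensor (a b : R -> R) :
  (forall x, continuity_pt a x) -> (forall y, continuity_pt b y) ->
  continuous2 (fun x y => a x * b y).
Proof.
  intros Ha Hb. apply continuous2_mult.
  - exact (continuous2_comp a _ Ha continuous2_fst).
  - exact (continuous2_comp b _ Hb continuous2_snd).
Qed.

Lemma continuous2_section f x : continuous2 f -> forall y, continuity_pt (fun y => f x y) y.
Proof.
  intros Hf y. apply continuity_pt_locally. intros eps.
  destruct (Hf x y eps) as [d Hd]. exists d. intros u Hu. apply Hd; auto.
  rewrite Rminus_eq_0, Rabs_R0. apply cond_pos.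
Qed.

Lemma ex_derive_continuity_pt (f : R -> R) x : ex_derive f x -> continuity_pt f x.
Proof.
  intros Hf. apply continuity_pt_filterlim.
  exact (ex_derive_continuous (K := R_AbsRing) (V := R_NormedModule) f x Hf).
Qed.

Lemma ex_RInt_continuity (f : R -> R) a b :
  (forall x, continuity_pt f x) -> ex_RInt f a b.
Proof.
  intros Hf. apply (ex_RInt_continuous (V := R_CompleteNormedModule)).
  intros z _. apply continuity_pt_filterlim, Hf.
Qed.

(* Coquelicot states these with the module operations [plus], [minus] and [scal],
   which [rewrite] does not match against [+], [-] and [*] on [R]. *)
Lemma RInt_plus_R (f g : R -> R) a b : ex_RInt f a b -> ex_RInt g a b ->
  RInt (fun x => f x + g x) a b = RInt f a b + RInt g a b.
Proof. exact (RInt_plus f g a b). Qed.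

Lemma RInt_minus_R (f g : R -> R) a b : ex_RInt f a b -> ex_RInt g a b ->
  RInt (fun x => f x - g x) a b = RInt f a b - RInt g a b.
Proof. exact (RInt_minus f g a b). Qed.

Lemma RInt_scal_R (f : R -> R) k a b : ex_RInt f a b ->
  RInt (fun x => k * f x) a b = k * RInt f a b.
Proof. exact (RInt_scal f a b k). Qed.

Lemma RInt_section_continuity f r x0 : continuous2 f -> 0 <= r ->
  continuity_pt (fun x => RInt (fun y => f x y) (-r) r) x0.
Proof.
  intros Hf Hr. apply continuity_pt_locally. intros eps.
  set (e := eps / (2 * r + 1)).
  assert (He : 0 < e) by (apply Rdiv_lt_0_compat; [apply cond_pos | lra]).
  destruct (uniform_continuity_2d f (x0 - 1) (x0 + 1) (-r) r
              (fun x y _ _ => Hf x y) (mkposreal e He)) as [d Hd].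
  assert (Hm : 0 < Rmin 1 d) by (apply Rmin_pos; [lra | apply cond_pos]).
  exists (mkposreal _ Hm). intros u Hu. change (Rabs (u - x0) < Rmin 1 d) in Hu.
  pose proof (Rmin_l 1 d). pose proof (Rmin_r 1 d). pose proof (Rabs_def2 _ _ Hu).
  rewrite <- RInt_minus_R by (apply ex_RInt_continuity, continuous2_section; auto).
  eapply Rle_lt_trans.
  - apply (abs_RInt_le_const _ _ _ e); [lra | |].
    + apply ex_RInt_continuity. intros t.
      apply continuity_pt_minus; apply continuous2_section; auto.
    + intros t Ht. apply Rlt_le, (Hd x0 t u t); try lra.
      apply Rabs_def1; lra.
  - assert (Hr1 : (r - - r) * e = eps - e) by (unfold e; field; lra). lra.
Qed.

Lemma ex_RInt_section f x a b : continuous2 f -> ex_RInt (fun y => f x y) a b.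
Proof. intros Hf. apply ex_RInt_continuity, continuous2_section, Hf. Qed.

Lemma ex_RInt_RInt_section f r a b : continuous2 f -> 0 <= r ->
  ex_RInt (fun x => RInt (fun y => f x y) (-r) r) a b.
Proof. intros Hf Hr. apply ex_RInt_continuity. intros; apply RInt_section_continuity; auto. Qed.

Definition square_RInt (f : R -> R -> R) (r : R) : R :=
  RInt (fun x => RInt (fun y => f x y) (-r) r) (-r) r.

Lemma square_integral_RInt f r : continuous2 f -> 0 <= r ->
  square_integral f r (square_RInt f r).
Proof.
  intros Hf Hr. exists (fun x => RInt (fun y => f x y) (-r) r). split.
  - intros x _. exists (ex_RInt_Reals_0 _ _ _ (ex_RInt_section f x (-r) r Hf)).
    symmetry. apply RInt_Reals.
  - exists (ex_RInt_Reals_0 _ _ _ (ex_RInt_RInt_section f r (-r) r Hf Hr)).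
    symmetry. apply RInt_Reals.
Qed.

Lemma square_RInt_plus f g r : continuous2 f -> continuous2 g -> 0 <= r ->
  square_RInt (fun x y => f x y + g x y) r = square_RInt f r + square_RInt g r.
Proof.
  intros Hf Hg Hr. unfold square_RInt.
  rewrite <- RInt_plus_R by (apply ex_RInt_RInt_section; auto).
  apply RInt_ext. intros x _. apply RInt_plus_R; apply ex_RInt_section; auto.
Qed.

Lemma square_RInt_scal f k r : continuous2 f -> 0 <= r ->
  square_RInt (fun x y => k * f x y) r = k * square_RInt f r.
Proof.
  intros Hf Hr. unfold square_RInt.
  rewrite <- RInt_scal_R by (apply ex_RInt_RInt_section; auto).
  apply RInt_ext. intros x _. apply RInt_scal_R, ex_RInt_section, Hf.
Qed.

Lemma square_RInt_le f g r : continuous2 f -> continuous2 g -> 0 <= r ->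
  (forall x y, f x y <= g x y) -> square_RInt f r <= square_RInt g r.
Proof.
  intros Hf Hg Hr Hfg. unfold square_RInt.
  apply RInt_le; [lra | apply ex_RInt_RInt_section; auto ..|].
  intros x _. apply RInt_le; [lra | apply ex_RInt_section; auto ..| auto].
Qed.

Lemma square_RInt_tensor a b r :
  (forall x, continuity_pt a x) -> (forall y, continuity_pt b y) ->
  square_RInt (fun x y => a x * b y) r = RInt a (-r) r * RInt b (-r) r.
Proof.
  intros Ha Hb. unfold square_RInt.
  rewrite (RInt_ext _ (fun x => RInt b (-r) r * a x)).
  - rewrite RInt_scal_R by (apply ex_RInt_continuity; auto). apply Rmult_comm.
  - intros x _. rewrite RInt_scal_R by (apply ex_RInt_continuity; auto). apply Rmult_comm.
Qed.

Lemma RInt_symmetric_nonneg (g : R -> R) r :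
  (forall x, continuity_pt g x) -> (forall x, 0 <= g x) -> 0 <= r -> 0 <= RInt g (-r) r.
Proof. intros Hc Hp Hr. apply RInt_ge_0; [lra | apply ex_RInt_continuity |]; auto. Qed.

Lemma RInt_symmetric_le_of_nonneg (g : R -> R) r s :
  (forall x, continuity_pt g x) -> (forall x, 0 <= g x) -> 0 <= r <= s ->
  RInt g (-r) r <= RInt g (-s) s.
Proof.
  intros Hc Hp Hrs.
  assert (E : forall a b, ex_RInt g a b) by (intros; apply ex_RInt_continuity; auto).
  rewrite <- (RInt_Chasles g (-s) (-r) s (E _ _) (E _ _)).
  rewrite <- (RInt_Chasles g (-r) r s (E _ _) (E _ _)).
  assert (0 <= RInt g (-s) (-r)) by (apply RInt_ge_0; auto; lra).
  assert (0 <= RInt g r s) by (apply RInt_ge_0; auto; lra).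
  change (RInt g (-r) r <= RInt g (-s) (-r) + (RInt g (-r) r + RInt g r s)). lra.
Qed.

Lemma square_RInt_nondecreasing f r s : continuous2 f -> (forall x y, 0 <= f x y) ->
  0 <= r <= s -> square_RInt f r <= square_RInt f s.
Proof.
  intros Hf Hp Hrs. unfold square_RInt. eapply Rle_trans.
  - apply RInt_symmetric_le_of_nonneg; [| | exact Hrs].
    + intros; apply RInt_section_continuity; auto; lra.
    + intros x. apply RInt_ge_0; [lra | apply ex_RInt_section; auto | auto].
  - apply RInt_le; [lra | apply ex_RInt_RInt_section; auto; lra ..|].
    intros x _. apply RInt_symmetric_le_of_nonneg; auto. apply continuous2_section, Hf.
Qed.

Definition tends_at_infty (g : R -> R) (l : R) : Prop :=
  forall e, 0 < e -> exists r0, 0 < r0 /\ forall r, r0 <= r -> Rabs (g r - l) < e.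

Lemma tends_at_infty_of_bounded_nondecreasing (g : R -> R) B :
  (forall r s, 0 <= r <= s -> g r <= g s) -> (forall r, 0 <= r -> g r <= B) ->
  exists l, tends_at_infty g l.
Proof.
  intros Hmono Hbound.
  set (E := fun z => exists r, 0 <= r /\ z = g r).
  destruct (completeness E) as [l [Hub Hlub]].
  - exists B. intros z [r [Hr ->]]. auto.
  - exists (g 0), 0. split; [lra | reflexivity].
  - exists l. intros e He.
    destruct (classic (exists r, 0 <= r /\ l - e < g r)) as [[r1 [Hr1 Hg1]] | Hnone].
    + exists (r1 + 1). split; [lra |]. intros r Hr.
      assert (g r1 <= g r) by (apply Hmono; lra).
      assert (g r <= l) by (apply Hub; exists r; split; [lra | reflexivity]).
      apply Rabs_def1; lra.
    + exfalso. assert (l <= l - e); [| lra]. apply Hlub. intros z [r [Hr ->]].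
      apply Rnot_lt_le. intros Hlt. apply Hnone. exists r; auto.
Qed.

Lemma tends_at_infty_minus g1 g2 l1 l2 :
  tends_at_infty g1 l1 -> tends_at_infty g2 l2 ->
  tends_at_infty (fun r => g1 r - g2 r) (l1 - l2).
Proof.
  intros H1 H2 e He.
  destruct (H1 (e / 2)) as [r1 [Hr1 H1']]; [lra |].
  destruct (H2 (e / 2)) as [r2 [Hr2 H2']]; [lra |].
  exists (Rmax r1 r2). split; [apply (Rlt_le_trans _ r1); auto; apply Rmax_l |].
  intros r Hr. pose proof (Rmax_l r1 r2). pose proof (Rmax_r r1 r2).
  specialize (H1' r ltac:(lra)). specialize (H2' r ltac:(lra)).
  apply Rabs_def2 in H1'. apply Rabs_def2 in H2'. apply Rabs_def1; lra.
Qed.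

Lemma tends_at_infty_le_ub (g : R -> R) l c :
  tends_at_infty g l -> (forall r, 0 <= r -> g r <= c) -> l <= c.
Proof.
  intros Hl Hc. apply Rnot_lt_le. intros Hlt.
  destruct (Hl (l - c)) as [r0 [Hr0 Hr]]; [lra |].
  specialize (Hr r0 (Rle_refl _)). specialize (Hc r0 ltac:(lra)).
  apply Rabs_def2 in Hr. lra.
Qed.

(* Both [P + K] and [P] are nonnegative, so their square integrals converge
   monotonically; [K] is their difference. *)
Lemma plane_integral_of_dominated (K P : R -> R -> R) B c :
  continuous2 K -> continuous2 P -> (forall x y, Rabs (K x y) <= P x y) ->
  (forall r, 0 <= r -> square_RInt P r <= B) ->
  (forall r, 0 <= r -> square_RInt K r <= c) ->
  exists I, plane_integral K I /\ I <= c.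
Proof.
  intros HK HP Hdom HB Hc.
  assert (HKP : forall x y, - P x y <= K x y <= P x y)
    by (intros x y; apply Rabs_le_between, Hdom).
  assert (HPK : continuous2 (fun x y => P x y + K x y)) by (apply continuous2_plus; auto).
  assert (HKP_le : forall r, 0 <= r -> square_RInt K r <= square_RInt P r)
    by (intros r Hr; apply square_RInt_le; auto; intros x y; apply HKP).
  destruct (tends_at_infty_of_bounded_nondecreasing
              (square_RInt (fun x y => P x y + K x y)) (2 * B)) as [l1 H1].
  { intros r s Hrs. apply square_RInt_nondecreasing; auto. intros x y; pose proof (HKP x y); lra. }
  { intros r Hr. rewrite square_RInt_plus by auto.
    specialize (HKP_le r Hr). specialize (HB r Hr). lra. }
  destruct (tends_at_infty_of_bounded_nondecreasing (square_RInt P) B) as [l2 H2].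
  { intros r s Hrs. apply square_RInt_nondecreasing; auto. intros x y; pose proof (HKP x y); lra. }
  { exact HB. }
  assert (HL : tends_at_infty (square_RInt K) (l1 - l2)).
  { intros e He. destruct (tends_at_infty_minus _ _ _ _ H1 H2 e He) as [r0 [Hr0 H]].
    exists r0. split; auto. intros r Hr. specialize (H r Hr). cbv beta in H.
    rewrite square_RInt_plus in H by (auto; lra). replace (square_RInt K r) with
      (square_RInt P r + square_RInt K r - square_RInt P r) by ring. exact H. }
  exists (l1 - l2). split.
  - intros e He. destruct (HL e He) as [r0 [Hr0 H]]. exists r0. split; auto.
    intros r Hr. exists (square_RInt K r). split; auto. apply square_integral_RInt; auto; lra.
  - apply (tends_at_infty_le_ub (square_RInt K)); auto.
Qed.

Definition lorentz (c t : R) : R := / (1 + c ^ 2 * t ^ 2).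

Lemma lorentz_continuity c x : continuity_pt (lorentz c) x.
Proof. apply ex_derive_continuity_pt. unfold lorentz. auto_derive. nra. Qed.

Lemma lorentz_pos c x : 0 < lorentz c x.
Proof. unfold lorentz. apply Rinv_0_lt_compat. nra. Qed.

Lemma RInt_lorentz_bounds c r : 0 < c -> 0 <= r ->
  0 <= RInt (lorentz c) (-r) r <= PI / c.
Proof.
  intros Hc Hr. split.
  - apply RInt_symmetric_nonneg; auto using lorentz_continuity.
    intros; apply Rlt_le, lorentz_pos.
  - set (F := fun t => atan (c * t) / c).
    rewrite (is_RInt_unique (lorentz c) (-r) r (F r - F (-r))).
    + unfold F. pose proof (atan_bound (c * r)). pose proof (atan_bound (c * - r)).
      unfold Rdiv. rewrite <- Rmult_minus_distr_r.
      apply Rmult_le_compat_r; [apply Rlt_le, Rinv_0_lt_compat; auto | lra].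
    + apply (is_RInt_derive (V := R_CompleteNormedModule) F).
      * intros x _. unfold F, lorentz. auto_derive; [auto |]. field; nra.
      * intros x _. apply continuity_pt_filterlim, lorentz_continuity.
Qed.

(* A regularisation of [- ln |t|] at scale [s]: it is at least [- ln |t|] for
   [|t| >= s] and at least [- ln s] for [|t| < s], while its integral over [R] is
   bounded uniformly in [s <= 1]. *)
Definition log_peak (s t : R) : R := ln ((t ^ 2 + (s + 2) ^ 2) / (t ^ 2 + s ^ 2)) / 2.

Definition log_peak_primitive (s t : R) : R :=
  t * ln ((t ^ 2 + (s + 2) ^ 2) / (t ^ 2 + s ^ 2))
  + 2 * (s + 2) * atan (t / (s + 2)) - 2 * s * atan (t / s).

Lemma log_peak_shift_continuity s c x : 0 < s -> continuity_pt (fun t => log_peak s (t + c)) x.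
Proof.
  intros Hs. apply ex_derive_continuity_pt. unfold log_peak. auto_derive.
  pose proof (pow2_ge_0 (x + c)). simpl in H. split; [nra | split; auto].
  apply Rmult_lt_0_compat; [nra | apply Rinv_0_lt_compat; nra].
Qed.

Lemma log_peak_continuity s x : 0 < s -> continuity_pt (log_peak s) x.
Proof.
  intros Hs. apply (continuity_pt_ext (fun t => log_peak s (t + 0))).
  - intros t. rewrite Rplus_0_r. reflexivity.
  - apply log_peak_shift_continuity, Hs.
Qed.

Lemma ln_le_sub_1 y : 0 < y -> ln y <= y - 1.
Proof. intros Hy. pose proof (exp_ineq1_le (ln y)) as He. rewrite exp_ln in He by auto. lra. Qed.

Lemma mul_ln_inv_le_1 u : 0 < u -> u * ln (/ u) <= 1.
Proof.
  intros Hu. pose proof (ln_le_sub_1 (/ u) (Rinv_0_lt_compat _ Hu)).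
  assert (Hmul : u * ln (/ u) <= u * (/ u - 1)) by (apply Rmult_le_compat_l; lra).
  rewrite Rmult_minus_distr_l, Rinv_r in Hmul by lra. lra.
Qed.

Lemma log_peak_ratio_ge_1 s t : 0 < s -> 1 <= (t ^ 2 + (s + 2) ^ 2) / (t ^ 2 + s ^ 2).
Proof.
  intros Hs. apply (Rmult_le_reg_r (t ^ 2 + s ^ 2)); [nra |].
  unfold Rdiv. rewrite Rmult_assoc, Rinv_l by nra. nra.
Qed.

Lemma log_peak_nonneg s x : 0 < s -> 0 <= log_peak s x.
Proof.
  intros Hs. unfold log_peak. apply Rmult_le_pos; [| lra].
  rewrite <- ln_1. apply ln_le; [lra | apply log_peak_ratio_ge_1, Hs].
Qed.

Lemma log_peak_primitive_derive s x : 0 < s ->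
  is_derive (log_peak_primitive s) x (2 * log_peak s x).
Proof.
  intros Hs. unfold log_peak_primitive, log_peak. auto_derive.
  - split; [nra | split; auto]. apply Rmult_lt_0_compat; [nra | apply Rinv_0_lt_compat; nra].
  - replace (x ^ 2) with (x * (x * 1)) by ring.
    replace ((s + 2) ^ 2) with ((s + 2) * ((s + 2) * 1)) by ring.
    replace (s ^ 2) with (s * (s * 1)) by ring. unfold Rdiv.
    set (LL := ln _). field. repeat split; nra.
Qed.

(* Away from the peak [ln Q <= Q - 1 <= 8 / t^2]; near it [Q <= 10 / t^2]
   and [|t| ln (1/|t|) <= 1]. *)
Lemma abs_mul_ln_log_peak_ratio_le s t : 0 < s <= 1 ->
  Rabs (t * ln ((t ^ 2 + (s + 2) ^ 2) / (t ^ 2 + s ^ 2))) <= 11.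
Proof.
  intros Hs. set (Q := (t ^ 2 + (s + 2) ^ 2) / (t ^ 2 + s ^ 2)).
  assert (HQ1 : 1 <= Q) by (apply log_peak_ratio_ge_1; lra).
  assert (Hl0 : 0 <= ln Q) by (rewrite <- ln_1; apply ln_le; lra).
  rewrite Rabs_mult, (Rabs_right (ln Q)) by lra.
  destruct (Req_dec t 0) as [-> | Ht0]; [rewrite Rabs_R0; lra |].
  set (u := Rabs t). assert (Hu : 0 < u) by (apply Rabs_pos_lt, Ht0).
  assert (Ht2 : t ^ 2 = u ^ 2) by (symmetry; apply pow2_abs).
  assert (HQ : Q * (u ^ 2 + s ^ 2) = u ^ 2 + (s + 2) ^ 2)
    by (unfold Q; rewrite Ht2; field; nra).
  destruct (Rle_lt_dec 1 u) as [H1 | H1].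
  - pose proof (ln_le_sub_1 Q ltac:(lra)).
    assert (Hq : (Q - 1) * u <= 8 / u).
    { apply (Rmult_le_reg_r (u * (u ^ 2 + s ^ 2))); [nra |].
      replace (8 / u * (u * (u ^ 2 + s ^ 2))) with (8 * (u ^ 2 + s ^ 2)) by (field; lra).
      nra. }
    assert (8 / u <= 8).
    { apply (Rmult_le_reg_r u); [lra |]. unfold Rdiv. rewrite Rmult_assoc, Rinv_l by lra. nra. }
    assert (u * ln Q <= u * (Q - 1)) by (apply Rmult_le_compat_l; lra).
    lra.
  - assert (HQ10 : Q <= 10 * (/ u * / u)).
    { apply (Rmult_le_reg_r (u * u * (u ^ 2 + s ^ 2))); [nra |].
      replace (10 * (/ u * / u) * (u * u * (u ^ 2 + s ^ 2))) with (10 * (u ^ 2 + s ^ 2))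
        by (field; lra).
      replace (Q * (u * u * (u ^ 2 + s ^ 2))) with (u ^ 2 * (u ^ 2 + (s + 2) ^ 2))
        by (rewrite <- HQ; ring).
      assert (u ^ 2 <= 1) by nra. assert ((s + 2) ^ 2 <= 9) by nra. nra. }
    assert (Hi : 0 < / u) by (apply Rinv_0_lt_compat; lra).
    assert (ln Q <= ln 10 + ln (/ u) + ln (/ u)).
    { rewrite <- (ln_mult 10 (/ u)), <- ln_mult by nra.
      apply ln_le; [lra |]. rewrite !Rmult_assoc. exact HQ10. }
    pose proof (ln_le_sub_1 10 ltac:(lra)). pose proof (mul_ln_inv_le_1 u Hu).
    assert (0 <= ln 10) by (rewrite <- ln_1; apply ln_le; lra).
    assert (u * ln Q <= u * (ln 10 + ln (/ u) + ln (/ u))) by (apply Rmult_le_compat_l; lra).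
    nra.
Qed.

Lemma abs_log_peak_primitive_le s t : 0 < s <= 1 -> Rabs (log_peak_primitive s t) <= 27.
Proof.
  intros Hs. unfold log_peak_primitive.
  pose proof (abs_mul_ln_log_peak_ratio_le s t Hs) as Hln.
  pose proof (atan_bound (t / (s + 2))). pose proof (atan_bound (t / s)). pose proof PI_4.
  set (u := t * ln _) in *. apply Rabs_le_between in Hln. apply Rabs_le_between. nra.
Qed.

Lemma RInt_log_peak_le s c d : 0 < s <= 1 -> RInt (log_peak s) c d <= 27.
Proof.
  intros Hs. set (F := fun t => log_peak_primitive s t / 2).
  rewrite (is_RInt_unique (log_peak s) c d (F d - F c)).
  - unfold F. pose proof (abs_log_peak_primitive_le s c Hs) as Hc.
    pose proof (abs_log_peak_primitive_le s d Hs) as Hd.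
    apply Rabs_le_between in Hc. apply Rabs_le_between in Hd. lra.
  - apply (is_RInt_derive (V := R_CompleteNormedModule) F).
    + intros x _. apply (is_derive_ext (fun t => / 2 * log_peak_primitive s t)).
      { intros t. apply Rmult_comm. }
      replace (log_peak s x) with (/ 2 * (2 * log_peak s x)) by field.
      apply is_derive_scal, log_peak_primitive_derive. lra.
    + intros x _. apply continuity_pt_filterlim, log_peak_continuity. lra.
Qed.

Lemma RInt_log_peak_shift_le s c r : 0 < s <= 1 ->
  RInt (fun x => log_peak s (x + c)) (-r) r <= 27.
Proof.
  intros Hs.
  assert (Hex : ex_RInt (log_peak s) (1 * - r + c) (1 * r + c))
    by (apply ex_RInt_continuity; intros; apply log_peak_continuity; lra).
  pose proof (RInt_comp_lin (V := R_CompleteNormedModule) (log_peak s) 1 c (-r) r Hex) as Hlin.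
  eapply Rle_trans; [| apply (RInt_log_peak_le s (1 * - r + c) (1 * r + c) Hs)].
  rewrite <- Hlin. apply Req_le, RInt_ext. intros x _.
  change (log_peak s (x + c) = 1 * log_peak s (1 * x + c)). rewrite !Rmult_1_l. reflexivity.
Qed.

(* [Fwv x y v = F_ratio (|w - 1|^2) (|w + 1|^2) v]. *)
Definition F_ratio (a b v : R) : R := (a * exp v - b) / (a * exp v + b).

Lemma F_ratio_denom_pos a b v : 0 <= a -> 0 <= b -> 0 < a + b -> 0 < a * exp v + b.
Proof.
  intros Ha Hb Hab. pose proof (exp_pos v).
  destruct (Req_dec a 0) as [-> | Ha0]; nra.
Qed.

Lemma F_ratio_nondecreasing a b v w : 0 <= a -> 0 <= b -> 0 < a + b -> v <= w ->
  F_ratio a b v <= F_ratio a b w.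
Proof.
  intros Ha Hb Hab Hvw. unfold F_ratio.
  pose proof (F_ratio_denom_pos a b v Ha Hb Hab). pose proof (F_ratio_denom_pos a b w Ha Hb Hab).
  assert (exp v <= exp w)
    by (destruct Hvw as [Hlt | ->]; [left; apply exp_increasing | right]; auto).
  apply (Rmult_le_reg_r ((a * exp v + b) * (a * exp w + b))); [nra |].
  field_simplify; [| lra ..]. assert (0 <= a * b) by nra. nra.
Qed.

Lemma abs_F_ratio_le_1 a b v : 0 <= a -> 0 <= b -> 0 < a + b -> Rabs (F_ratio a b v) <= 1.
Proof.
  intros Ha Hb Hab. pose proof (F_ratio_denom_pos a b v Ha Hb Hab). pose proof (exp_pos v).
  unfold F_ratio. unfold Rdiv; rewrite Rabs_mult, Rabs_inv, (Rabs_right (a * exp v + b)) by lra.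
  apply (Rmult_le_reg_r (a * exp v + b)); [lra |].
  rewrite Rmult_assoc, Rinv_l, Rmult_1_r, Rmult_1_l by lra.
  apply Rabs_le. split; nra.
Qed.

Lemma F_ratio_ln_zero a b : 0 < a -> 0 < b -> F_ratio a b (ln b - ln a) = 0.
Proof.
  intros Ha Hb. unfold F_ratio.
  replace (a * exp (ln b - ln a) - b) with 0; [unfold Rdiv; ring |].
  unfold Rminus. rewrite exp_plus, exp_Ropp, !exp_ln by auto. field. lra.
Qed.

Lemma abs_neg_F_ratio_mul_le a b v M : 0 <= a -> 0 <= b -> 0 < a + b -> Rabs v <= M ->
  Rabs (- F_ratio a b v * v) <= M.
Proof.
  intros Ha Hb Hab Hv. rewrite Rabs_mult, Rabs_Ropp.
  pose proof (abs_F_ratio_le_1 a b v Ha Hb Hab). pose proof (Rabs_pos v).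
  pose proof (Rabs_pos (F_ratio a b v)). nra.
Qed.

Lemma neg_F_ratio_mul_le a b v : 0 <= a -> 0 <= b -> 0 < a + b ->
  - F_ratio a b v * v <= Rabs v * Rabs (F_ratio a b 0).
Proof.
  intros Ha Hb Hab. pose proof (Rle_abs (F_ratio a b 0)) as H0.
  pose proof (Rle_abs (- F_ratio a b 0)) as H0'. rewrite Rabs_Ropp in H0'.
  destruct (Rle_lt_dec 0 v) as [Hv | Hv].
  - pose proof (F_ratio_nondecreasing a b 0 v Ha Hb Hab Hv).
    rewrite Rabs_right by lra. nra.
  - pose proof (F_ratio_nondecreasing a b v 0 Ha Hb Hab ltac:(lra)).
    rewrite Rabs_left by lra. nra.
Qed.

(* [F_ratio a b] vanishes at [ln b - ln a] and is monotone, so [- F_ratio a b v * v]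
   can only be positive for [v] between [0] and [ln b - ln a]. *)
Lemma abs_le_of_neg_F_ratio_mul_pos a b v : 0 < a -> 0 < b -> 0 < - F_ratio a b v * v ->
  Rabs v <= Rabs (ln b - ln a).
Proof.
  intros Ha Hb Hpos. set (c := ln b - ln a).
  pose proof (F_ratio_ln_zero a b Ha Hb) as Hc. fold c in Hc.
  pose proof (Rle_abs c). pose proof (Rle_abs (- c)). rewrite Rabs_Ropp in *.
  destruct (Rle_lt_dec 0 v) as [Hv | Hv].
  - assert (v < c).
    { apply Rnot_le_lt. intros Hcv.
      pose proof (F_ratio_nondecreasing a b c v ltac:(lra) ltac:(lra) ltac:(lra) Hcv). nra. }
    rewrite Rabs_right by lra. lra.
  - assert (c < v).
    { apply Rnot_le_lt. intros Hcv.
      pose proof (F_ratio_nondecreasing a b v c ltac:(lra) ltac:(lra) ltac:(lra) Hcv). nra. }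
    rewrite Rabs_left by lra. lra.
Qed.

Lemma ln_sub_le a b : 0 < a -> 0 < b -> ln b - ln a <= (b - a) / a.
Proof.
  intros Ha Hb.
  replace (ln b - ln a) with (ln (b / a))
    by (unfold Rdiv; rewrite ln_mult, ln_Rinv by (try apply Rinv_0_lt_compat; auto); ring).
  replace ((b - a) / a) with (b / a - 1) by (field; lra).
  apply ln_le_sub_1, Rdiv_lt_0_compat; auto.
Qed.

(* Far from the vortices [|w -/+ 1|^2 = P -/+ 2 x] with [P = 1 + |w|^2] are
   comparable to [P], so both factors of [- F v * v] are [O (|x| / P)]. *)
Lemma neg_F_ratio_mul_far_le P x v : 0 < P -> 4 * Rabs x <= P ->
  - F_ratio (P - 2 * x) (P + 2 * x) v * v <= 16 * x ^ 2 / P ^ 2.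
Proof.
  intros HP Hx. pose proof (Rle_abs x). pose proof (Rle_abs (- x)). rewrite Rabs_Ropp in *.
  assert (Ha : 0 < P - 2 * x) by lra. assert (Hb : 0 < P + 2 * x) by lra.
  assert (Hrhs : 16 * x ^ 2 / P ^ 2 = 8 * Rabs x / P * (2 * Rabs x / P))
    by (rewrite <- (pow2_abs x); field; lra).
  assert (Hxp : 0 <= 2 * Rabs x / P) by (apply Rdiv_le_0_compat; lra).
  destruct (Rle_lt_dec (- F_ratio (P - 2 * x) (P + 2 * x) v * v) 0) as [Hneg | Hpos].
  { rewrite Hrhs. assert (0 <= 8 * Rabs x / P) by (apply Rdiv_le_0_compat; lra). nra. }
  assert (Hv : Rabs v <= 8 * Rabs x / P).
  { eapply Rle_trans; [apply (abs_le_of_neg_F_ratio_mul_pos _ _ v Ha Hb Hpos) |].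
    pose proof (ln_sub_le _ _ Ha Hb). pose proof (ln_sub_le _ _ Hb Ha).
    assert ((P + 2 * x - (P - 2 * x)) / (P - 2 * x) <= 8 * Rabs x / P).
    { apply (Rmult_le_reg_r ((P - 2 * x) * P)); [nra |]. field_simplify; nra. }
    assert ((P - 2 * x - (P + 2 * x)) / (P + 2 * x) <= 8 * Rabs x / P).
    { apply (Rmult_le_reg_r ((P + 2 * x) * P)); [nra |]. field_simplify; nra. }
    apply Rabs_le. lra. }
  assert (HF0 : Rabs (F_ratio (P - 2 * x) (P + 2 * x) 0) = 2 * Rabs x / P).
  { unfold F_ratio. rewrite exp_0, !Rmult_1_r.
    replace ((P - 2 * x - (P + 2 * x)) / (P - 2 * x + (P + 2 * x))) with (- (2 * x / P))
      by (field; lra).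
    rewrite Rabs_Ropp. unfold Rdiv. rewrite !Rabs_mult, Rabs_inv, (Rabs_right 2), (Rabs_right P)
      by lra. reflexivity. }
  pose proof (neg_F_ratio_mul_le (P - 2 * x) (P + 2 * x) v ltac:(lra) ltac:(lra) ltac:(lra))
    as Hle.
  rewrite HF0 in Hle. rewrite Hrhs. nra.
Qed.

Lemma log_peak_ge_ln s t c : 0 < s -> 0 < c ->
  c * (t ^ 2 + s ^ 2) <= t ^ 2 + (s + 2) ^ 2 -> ln c / 2 <= log_peak s t.
Proof.
  intros Hs Hc H. unfold log_peak. apply Rmult_le_compat_r; [lra |].
  apply ln_le; [auto | apply Rle_div_r; [nra | exact H]].
Qed.

Lemma log_peak_ge_of_small s t : 0 < s -> t ^ 2 < s ^ 2 -> - ln s <= log_peak s t.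
Proof.
  intros Hs Ht.
  replace (- ln s) with (ln (/ s ^ 2) / 2) by (rewrite ln_Rinv, ln_pow by nra; simpl; field).
  apply log_peak_ge_ln; [auto | apply Rinv_0_lt_compat; nra |].
  apply (Rmult_le_reg_l (s ^ 2)); [nra |]. rewrite <- Rmult_assoc, Rinv_r by nra. nra.
Qed.

Lemma log_peak_ge_of_large s t : 0 < s -> s ^ 2 <= t ^ 2 -> - ln (t ^ 2) / 2 <= log_peak s t.
Proof.
  intros Hs Ht. rewrite <- ln_Rinv by nra.
  apply log_peak_ge_ln; [auto | apply Rinv_0_lt_compat; nra |].
  apply (Rmult_le_reg_l (t ^ 2)); [nra |]. rewrite <- Rmult_assoc, Rinv_r by nra. nra.
Qed.

Lemma abs_ln_sum_sq_le s p q : 0 < s -> s ^ 2 <= p ^ 2 -> s ^ 2 <= q ^ 2 ->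
  p ^ 2 + q ^ 2 <= 25 -> Rabs (ln (p ^ 2 + q ^ 2)) <= 24 + log_peak s p + log_peak s q.
Proof.
  intros Hs Hp Hq H25.
  pose proof (log_peak_nonneg s p Hs). pose proof (log_peak_nonneg s q Hs).
  assert (Hpa : p ^ 2 <= p ^ 2 + q ^ 2) by nra. assert (Hqa : q ^ 2 <= p ^ 2 + q ^ 2) by nra.
  assert (Hp0 : 0 < p ^ 2) by (pose proof (pow2_ge_0 s); nra).
  assert (Hq0 : 0 < q ^ 2) by (pose proof (pow2_ge_0 s); nra).
  set (a := p ^ 2 + q ^ 2) in *.
  destruct (Rle_lt_dec 1 a) as [Ha1 | Ha1].
  - assert (0 <= ln a) by (rewrite <- ln_1; apply ln_le; lra).
    pose proof (ln_le_sub_1 a ltac:(lra)). rewrite Rabs_right; lra.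
  - assert (ln a < 0) by (rewrite <- ln_1; apply ln_increasing; lra).
    pose proof (log_peak_ge_of_large s p Hs Hp). pose proof (log_peak_ge_of_large s q Hs Hq).
    assert (Hln : ln (p ^ 2 * q ^ 2) <= ln (a * a)) by (apply ln_le; nra).
    rewrite !ln_mult in Hln by nra. rewrite Rabs_left by lra. lra.
Qed.

(* Close to the vortices [-F v * v <= |v| <= |ln |w+1|^2 - ln |w-1|^2|]; the
   logarithms are dominated by log peaks, except within distance [s] of a
   coordinate line through a vortex, where one peak alone exceeds [|v|]. *)
Lemma neg_F_ratio_mul_near_le x y v s : 0 < s -> Rabs v <= - ln s ->
  1 + x ^ 2 + y ^ 2 < 4 * Rabs x ->
  - F_ratio ((x - 1) ^ 2 + y ^ 2) ((x + 1) ^ 2 + y ^ 2) v * v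
  <= 48 + log_peak s (x + -1) + log_peak s (x + 1) + 2 * log_peak s y.
Proof.
  intros Hs Hv Hnear.
  pose proof (log_peak_nonneg s (x + -1) Hs). pose proof (log_peak_nonneg s (x + 1) Hs).
  pose proof (log_peak_nonneg s y Hs).
  pose proof (pow2_ge_0 (x - 1)). pose proof (pow2_ge_0 (x + 1)). pose proof (pow2_ge_0 y).
  set (a := (x - 1) ^ 2 + y ^ 2). set (b := (x + 1) ^ 2 + y ^ 2).
  assert (Ha : 0 <= a) by (unfold a; lra). assert (Hb : 0 <= b) by (unfold b; lra).
  assert (Hab : 0 < a + b) by (unfold a, b; nra).
  pose proof (abs_neg_F_ratio_mul_le a b v (Rabs v) Ha Hb Hab (Rle_refl _)) as Hbound.
  apply Rabs_le_between in Hbound.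
  destruct (Rlt_le_dec ((x + -1) ^ 2) (s ^ 2)) as [C1 | C1].
  { pose proof (log_peak_ge_of_small s _ Hs C1). lra. }
  destruct (Rlt_le_dec ((x + 1) ^ 2) (s ^ 2)) as [C2 | C2].
  { pose proof (log_peak_ge_of_small s _ Hs C2). lra. }
  destruct (Rlt_le_dec (y ^ 2) (s ^ 2)) as [C3 | C3].
  { pose proof (log_peak_ge_of_small s _ Hs C3). lra. }
  destruct (Rle_lt_dec (- F_ratio a b v * v) 0) as [Hneg | Hpos]; [lra |].
  assert (Hx4 : Rabs x < 4) by (pose proof (Rabs_pos x); rewrite <- pow2_abs in Hnear; nra).
  pose proof (Rle_abs x). pose proof (Rle_abs (- x)). rewrite Rabs_Ropp in *.
  assert (Hla : Rabs (ln a) <= 24 + log_peak s (x + -1) + log_peak s y)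
    by (replace a with ((x + -1) ^ 2 + y ^ 2) by (unfold a; ring);
        apply abs_ln_sum_sq_le; auto; nra).
  assert (Hlb : Rabs (ln b) <= 24 + log_peak s (x + 1) + log_peak s y)
    by (apply abs_ln_sum_sq_le; auto; nra).
  pose proof (abs_le_of_neg_F_ratio_mul_pos a b v ltac:(unfold a; nra) ltac:(unfold b; nra) Hpos)
    as Hv_ln.
  pose proof (Rabs_triang (ln b) (- ln a)) as Htri. rewrite Rabs_Ropp in Htri.
  replace (ln b + - ln a) with (ln b - ln a) in Htri by ring. lra.
Qed.

(* [eps_weight eps = areaS2 * f_eps eps ^ 2 / 4]. *)
Definition eps_weight (eps x y : R) : R := / (1 + eps ^ 2 * (x ^ 2 + y ^ 2)) ^ 2.

Lemma eps_weight_pos eps x y : 0 < eps_weight eps x y.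
Proof. unfold eps_weight. apply Rinv_0_lt_compat, pow_lt. nra. Qed.

Lemma eps_weight_le_1 eps x y : eps_weight eps x y <= 1.
Proof. unfold eps_weight. rewrite <- Rinv_1. apply Rinv_le_contravar; nra. Qed.

Lemma eps_weight_le_lorentz eps x y : eps_weight eps x y <= lorentz eps y.
Proof. unfold eps_weight, lorentz. apply Rinv_le_contravar; nra. Qed.

Lemma eps_weight_le_lorentz_tensor eps x y :
  eps_weight eps x y <= lorentz eps x * lorentz eps y.
Proof.
  unfold eps_weight, lorentz. rewrite <- Rinv_mult.
  assert (0 <= eps ^ 2 * x ^ 2) by nra. assert (0 <= eps ^ 2 * y ^ 2) by nra.
  apply Rinv_le_contravar; nra.
Qed.

Lemma lorentz_1_ge t : t ^ 2 <= 16 -> / 17 <= lorentz 1 t.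
Proof. intros Ht. unfold lorentz. apply Rinv_le_contravar; nra. Qed.

Lemma sq_div_sq_le_lorentz x y : x ^ 2 / (1 + x ^ 2 + y ^ 2) ^ 2 <= lorentz 1 x.
Proof.
  unfold lorentz. pose proof (pow2_ge_0 x). pose proof (pow2_ge_0 y).
  apply (Rmult_le_reg_r ((1 + 1 ^ 2 * x ^ 2) * (1 + x ^ 2 + y ^ 2) ^ 2)); [nra |].
  replace (x ^ 2 / (1 + x ^ 2 + y ^ 2) ^ 2 * ((1 + 1 ^ 2 * x ^ 2) * (1 + x ^ 2 + y ^ 2) ^ 2))
    with (x ^ 2 * (1 + x ^ 2)) by (field; nra).
  replace (/ (1 + 1 ^ 2 * x ^ 2) * ((1 + 1 ^ 2 * x ^ 2) * (1 + x ^ 2 + y ^ 2) ^ 2))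
    with ((1 + x ^ 2 + y ^ 2) ^ 2) by (field; nra).
  nra.
Qed.

(* The first term covers the far region; the others cover the near-region bound of
   [neg_F_ratio_mul_near_le], where [|x|, |y| < 4] gives [lorentz 1 >= 1/17]:
   hence [13872 = 48 * 17 ^ 2]. *)
Definition vortex_majorant (s eps x y : R) : R :=
  16 * (lorentz 1 x * lorentz eps y) + 13872 * (lorentz 1 x * lorentz 1 y)
  + 17 * ((log_peak s (x + -1) + log_peak s (x + 1)) * lorentz 1 y)
  + 34 * (lorentz 1 x * log_peak s y).

Lemma vortex_majorant_summands_nonneg s eps x y : 0 < s ->
  0 <= 16 * (lorentz 1 x * lorentz eps y) /\ 0 <= 13872 * (lorentz 1 x * lorentz 1 y) /\
  0 <= 17 * ((log_peak s (x + -1) + log_peak s (x + 1)) * lorentz 1 y) /\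
  0 <= 34 * (lorentz 1 x * log_peak s y).
Proof.
  intros Hs.
  pose proof (log_peak_nonneg s (x + -1) Hs). pose proof (log_peak_nonneg s (x + 1) Hs).
  pose proof (log_peak_nonneg s y Hs).
  pose proof (lorentz_pos 1 x). pose proof (lorentz_pos 1 y). pose proof (lorentz_pos eps y).
  repeat split; nra.
Qed.

Lemma neg_F_ratio_mul_weight_le_vortex_majorant eps x y v s : 0 < s -> Rabs v <= - ln s ->
  - F_ratio ((x - 1) ^ 2 + y ^ 2) ((x + 1) ^ 2 + y ^ 2) v * v * eps_weight eps x y
  <= vortex_majorant s eps x y.
Proof.
  intros Hs Hv.
  pose proof (eps_weight_pos eps x y). pose proof (eps_weight_le_1 eps x y).
  pose proof (eps_weight_le_lorentz eps x y).
  destruct (vortex_majorant_summands_nonneg s eps x y Hs) as [T1 [T2 [T3 T4]]].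
  unfold vortex_majorant. set (p := - F_ratio _ _ v * v).
  destruct (Rle_lt_dec p 0) as [Hp | Hp]; [nra |].
  pose proof (pow2_ge_0 x) as Hx2. pose proof (pow2_ge_0 y) as Hy2.
  destruct (Rle_lt_dec (4 * Rabs x) (1 + x ^ 2 + y ^ 2)) as [Far | Near].
  - pose proof (neg_F_ratio_mul_far_le (1 + x ^ 2 + y ^ 2) x v ltac:(lra) Far) as HF.
    replace (1 + x ^ 2 + y ^ 2 - 2 * x) with ((x - 1) ^ 2 + y ^ 2) in HF by ring.
    replace (1 + x ^ 2 + y ^ 2 + 2 * x) with ((x + 1) ^ 2 + y ^ 2) in HF by ring.
    fold p in HF.
    assert (p <= 16 * lorentz 1 x).
    { pose proof (sq_div_sq_le_lorentz x y). unfold Rdiv in *. lra. }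
    assert (p * eps_weight eps x y <= 16 * lorentz 1 x * lorentz eps y)
      by (apply Rmult_le_compat; lra).
    lra.
  - pose proof (neg_F_ratio_mul_near_le x y v s Hs Hv Near) as HN. fold p in HN.
    pose proof (Rabs_pos x). rewrite <- pow2_abs in Near, Hx2.
    assert (Hx : x ^ 2 <= 16) by (rewrite <- pow2_abs; nra).
    assert (Hy : y ^ 2 <= 16) by nra.
    pose proof (lorentz_1_ge x Hx). pose proof (lorentz_1_ge y Hy).
    pose proof (log_peak_nonneg s (x + -1) Hs). pose proof (log_peak_nonneg s (x + 1) Hs).
    pose proof (log_peak_nonneg s y Hs).
    assert (p * eps_weight eps x y <= p) by nra.
    assert (48 <= 13872 * (lorentz 1 x * lorentz 1 y)) by nra.
    assert (log_peak s (x + -1) + log_peak s (x + 1)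
            <= 17 * ((log_peak s (x + -1) + log_peak s (x + 1)) * lorentz 1 y)) by nra.
    assert (2 * log_peak s y <= 34 * (lorentz 1 x * log_peak s y)) by nra.
    lra.
Qed.

Lemma square_RInt_scal_tensor k a b r :
  (forall x, continuity_pt a x) -> (forall y, continuity_pt b y) -> 0 <= r ->
  square_RInt (fun x y => k * (a x * b y)) r = k * (RInt a (-r) r * RInt b (-r) r).
Proof.
  intros Ha Hb Hr. rewrite square_RInt_scal by (auto; apply continuous2_tensor; auto).
  rewrite square_RInt_tensor; auto.
Qed.

Lemma log_peak_pair_continuity s x : 0 < s ->
  continuity_pt (fun t => log_peak s (t + -1) + log_peak s (t + 1)) x.
Proof.
  intros Hs.
  apply (continuity_pt_plus (fun t => log_peak s (t + -1)) (fun t => log_peak s (t + 1)));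
    apply log_peak_shift_continuity, Hs.
Qed.

Lemma continuous2_vortex_majorant s eps : 0 < s -> continuous2 (vortex_majorant s eps).
Proof.
  intros Hs. unfold vortex_majorant.
  repeat apply continuous2_plus; apply continuous2_scal, continuous2_tensor; intros;
    first [apply lorentz_continuity | apply log_peak_pair_continuity, Hs
          | apply log_peak_continuity, Hs].
Qed.

Lemma square_RInt_vortex_majorant s eps r : 0 < s -> 0 <= r ->
  square_RInt (vortex_majorant s eps) r =
  16 * (RInt (lorentz 1) (-r) r * RInt (lorentz eps) (-r) r)
  + 13872 * (RInt (lorentz 1) (-r) r * RInt (lorentz 1) (-r) r)
  + 17 * ((RInt (fun x => log_peak s (x + -1)) (-r) r + RInt (fun x => log_peak s (x + 1)) (-r) r)
          * RInt (lorentz 1) (-r) r)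
  + 34 * (RInt (lorentz 1) (-r) r * RInt (log_peak s) (-r) r).
Proof.
  intros Hs Hr. unfold vortex_majorant.
  set (pair := fun t => log_peak s (t + -1) + log_peak s (t + 1)).
  assert (Cp : forall x, continuity_pt pair x) by (intros; apply log_peak_pair_continuity, Hs).
  assert (Cl : forall x, continuity_pt (log_peak s) x) by (intros; apply log_peak_continuity, Hs).
  assert (CL := lorentz_continuity).
  assert (T : forall k a b, (forall x, continuity_pt a x) -> (forall y, continuity_pt b y) ->
            continuous2 (fun x y => k * (a x * b y)))
    by (intros; apply continuous2_scal, continuous2_tensor; auto).
  rewrite (square_RInt_plus _ (fun x y => 34 * (lorentz 1 x * log_peak s y)))
    by (try assumption; repeat apply continuous2_plus; apply T; auto).
  rewrite (square_RInt_plus _ (fun x y => 17 * (pair x * lorentz 1 y)))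
    by (try assumption; repeat apply continuous2_plus; apply T; auto).
  rewrite (square_RInt_plus (fun x y => 16 * (lorentz 1 x * lorentz eps y)))
    by (try assumption; apply T; auto).
  rewrite (square_RInt_scal_tensor 16 (lorentz 1) (lorentz eps)),
    (square_RInt_scal_tensor 13872 (lorentz 1) (lorentz 1)),
    (square_RInt_scal_tensor 17 pair (lorentz 1)),
    (square_RInt_scal_tensor 34 (lorentz 1) (log_peak s)) by auto.
  unfold pair.
  rewrite RInt_plus_R by (apply ex_RInt_continuity; intros; apply log_peak_shift_continuity, Hs).
  reflexivity.
Qed.

Lemma square_RInt_vortex_majorant_le s eps r : 0 < s <= 1 -> 0 < eps <= 1 -> 0 <= r ->
  square_RInt (vortex_majorant s eps) r <= 230000 / eps.
Proof.
  intros Hs He Hr. rewrite square_RInt_vortex_majorant by (auto; lra).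
  destruct (RInt_lorentz_bounds 1 r ltac:(lra) Hr) as [I1a I1b].
  destruct (RInt_lorentz_bounds eps r ltac:(lra) Hr) as [I2a I2b].
  pose proof (RInt_log_peak_shift_le s (-1) r Hs). pose proof (RInt_log_peak_shift_le s 1 r Hs).
  pose proof (RInt_log_peak_le s (-r) r Hs).
  assert (Hpos : forall g, (forall x, continuity_pt g x) -> (forall x, 0 <= g x) ->
            0 <= RInt g (-r) r) by (intros; apply RInt_symmetric_nonneg; auto).
  pose proof (Hpos (fun x => log_peak s (x + -1))
                (fun x => log_peak_shift_continuity s _ x (proj1 Hs))
                (fun x => log_peak_nonneg s _ (proj1 Hs))).
  pose proof (Hpos (fun x => log_peak s (x + 1))
                (fun x => log_peak_shift_continuity s _ x (proj1 Hs))
                (fun x => log_peak_nonneg s _ (proj1 Hs))).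
  pose proof (Hpos (log_peak s) (fun x => log_peak_continuity s x (proj1 Hs))
                (fun x => log_peak_nonneg s x (proj1 Hs))).
  pose proof PI_4.
  replace (PI / 1) with PI in I1b by field.
  assert (Hinv : 1 <= / eps) by (rewrite <- Rinv_1; apply Rinv_le_contravar; lra).
  assert (RInt (lorentz eps) (-r) r <= 4 * / eps).
  { eapply Rle_trans; [apply I2b |]. unfold Rdiv. apply Rmult_le_compat_r; lra. }
  set (I1 := RInt (lorentz 1) (-r) r) in *. set (I2 := RInt (lorentz eps) (-r) r) in *.
  unfold Rdiv. nra.
Qed.

(* Walk from the origin to [(x, y)] in [N] steps shorter than the modulus of
   uniform continuity for [1]; each step changes [f] by less than [1]. *)
Lemma bounded_on_unit_square f : continuous2 f ->
  exists M, forall x y, -1 <= x <= 1 -> -1 <= y <= 1 -> Rabs (f x y) <= M.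
Proof.
  intros Hf.
  destruct (uniform_continuity_2d f (-1) 1 (-1) 1 (fun x y _ _ => Hf x y) (mkposreal 1 Rlt_0_1))
    as [d Hd].
  destruct (archimed_cor1 d (cond_pos d)) as [N [HN HN0]].
  assert (HNpos : 0 < INR N) by (apply lt_0_INR; exact HN0).
  exists (Rabs (f 0 0) + INR N). intros x y Hx Hy.
  set (t := fun i => INR i / INR N).
  assert (Ht : forall i, (i <= N)%nat -> 0 <= t i <= 1).
  { intros i Hi. unfold t. apply le_INR in Hi. pose proof (pos_INR i). split.
    - apply Rdiv_le_0_compat; lra.
    - apply Rle_div_l; lra. }
  assert (Hstep : forall i z, (i < N)%nat -> -1 <= z <= 1 -> Rabs (t (S i) * z - t i * z) < d).
  { intros i z Hi Hz. unfold t. rewrite S_INR.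
    replace ((INR i + 1) / INR N * z - INR i / INR N * z) with (z * / INR N) by (field; lra).
    rewrite Rabs_mult, (Rabs_right (/ INR N)) by (apply Rle_ge, Rlt_le, Rinv_0_lt_compat; lra).
    apply Rabs_le in Hz. pose proof (Rinv_0_lt_compat _ HNpos). nra. }
  set (g := fun i => f (t i * x) (t i * y)).
  assert (Hchain : forall i, (i <= N)%nat -> Rabs (g i - f 0 0) <= INR i).
  { induction i as [| i IH]; intros Hi.
    - unfold g, t. simpl. unfold Rdiv. rewrite !Rmult_0_l, Rminus_eq_0, Rabs_R0. lra.
    - destruct (Ht i ltac:(lia)). destruct (Ht (S i) Hi).
      pose proof (Hd (t i * x) (t i * y) (t (S i) * x) (t (S i) * y)
                    ltac:(split; nra) ltac:(split; nra) ltac:(split; nra) ltac:(split; nra)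
                    (Hstep i x ltac:(lia) Hx) (Hstep i y ltac:(lia) Hy)) as Hi1.
      change (Rabs (g (S i) - g i) < 1) in Hi1.
      specialize (IH ltac:(lia)). rewrite S_INR.
      pose proof (Rabs_triang (g (S i) - g i) (g i - f 0 0)) as Htri.
      replace (g (S i) - g i + (g i - f 0 0)) with (g (S i) - f 0 0) in Htri by ring.
      lra. }
  specialize (Hchain N (le_n N)). unfold g in Hchain.
  replace (t N) with 1 in Hchain by (unfold t; field; lra). rewrite !Rmult_1_l in Hchain.
  pose proof (Rabs_triang_inv (f x y) (f 0 0)). lra.
Qed.

Lemma smooth_on_S2_continuous2 h : smooth_on_S2 h -> continuous2 h.
Proof. intros [Hh _]. apply cont2_continuous2, (Hh 0%nat). Qed.

(* Every point lies in the unit disc of one of the two charts. *)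
Lemma smooth_on_S2_bounded h : smooth_on_S2 h -> exists M, forall x y, Rabs (h x y) <= M.
Proof.
  intros Hsm. pose proof (smooth_on_S2_continuous2 h Hsm) as Ch.
  destruct Hsm as [_ [g [Hg Hgh]]].
  destruct (bounded_on_unit_square h Ch) as [M1 H1].
  destruct (bounded_on_unit_square g (cont2_continuous2 g (Hg 0%nat))) as [M2 H2].
  exists (Rmax M1 M2). intros x y. pose proof (Rmax_l M1 M2). pose proof (Rmax_r M1 M2).
  pose proof (pow2_ge_0 x). pose proof (pow2_ge_0 y).
  destruct (Rle_lt_dec (x ^ 2 + y ^ 2) 1) as [Hin | Hout].
  - specialize (H1 x y ltac:(split; nra) ltac:(split; nra)). lra.
  - set (u := x / (x ^ 2 + y ^ 2)). set (v := - y / (x ^ 2 + y ^ 2)).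
    assert (Huv : u ^ 2 + v ^ 2 = / (x ^ 2 + y ^ 2)) by (unfold u, v; field; lra).
    assert (Huv1 : u ^ 2 + v ^ 2 < 1) by (rewrite Huv, <- Rinv_1; apply Rinv_lt_contravar; lra).
    assert (Huv0 : u <> 0 \/ v <> 0).
    { destruct (Req_dec u 0) as [Hu | Hu]; [right | left; exact Hu]. intros Hv.
      rewrite Hu, Hv in Huv. pose proof (Rinv_0_lt_compat (x ^ 2 + y ^ 2) ltac:(lra)). nra. }
    specialize (Hgh u v Huv0).
    replace (u / (u ^ 2 + v ^ 2)) with x in Hgh by (rewrite Huv; unfold u; field; lra).
    replace (- v / (u ^ 2 + v ^ 2)) with y in Hgh by (rewrite Huv; unfold v; field; lra).
    pose proof (pow2_ge_0 u). pose proof (pow2_ge_0 v).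
    specialize (H2 u v ltac:(split; nra) ltac:(split; nra)). rewrite Hgh in H2. lra.
Qed.

Definition vortex_density (eps : R) (h : R -> R -> R) (x y : R) : R :=
  - F_ratio ((x - 1) ^ 2 + y ^ 2) ((x + 1) ^ 2 + y ^ 2) (h x y) * h x y * eps_weight eps x y.

Lemma vortex_F_ratio_denom_pos x y v :
  0 < ((x - 1) ^ 2 + y ^ 2) * exp v + ((x + 1) ^ 2 + y ^ 2).
Proof.
  pose proof (pow2_ge_0 (x - 1)). pose proof (pow2_ge_0 (x + 1)). pose proof (pow2_ge_0 y).
  apply F_ratio_denom_pos; nra.
Qed.

Lemma pairing_integrand_eq Rad eps h L : hat_h_equation Rad eps h L ->
  (fun x y => h x y * (- lapS2 L x y) * areaS2 x y)
  = (fun x y => 8 * Rad ^ 2 * eps ^ 2 * vortex_density eps h x y).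
Proof.
  intros Heq. apply functional_extensionality; intros x.
  apply functional_extensionality; intros y.
  replace (- lapS2 L x y) with (- (2 * Rad ^ 2 * eps ^ 2 * f_eps eps x y ^ 2 * Fwv x y (h x y)))
    by (specialize (Heq x y); lra).
  unfold vortex_density, F_ratio, eps_weight, f_eps, areaS2, Fwv.
  pose proof (pow2_ge_0 x). pose proof (pow2_ge_0 y). pose proof (pow2_ge_0 eps).
  pose proof (vortex_F_ratio_denom_pos x y (h x y)).
  field. repeat split; nra.
Qed.

Lemma continuous2_vortex_density eps h : continuous2 h -> continuous2 (vortex_density eps h).
Proof.
  intros Hh.
  assert (Hsq : forall c, continuous2 (fun x y => (x + c) ^ 2 + y ^ 2)).
  { intros c. apply continuous2_plus; apply continuous2_pow2; [| apply continuous2_snd].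
    apply continuous2_plus; [apply continuous2_fst | apply continuous2_const]. }
  assert (Ca := Hsq (-1)). assert (Cb := Hsq 1). cbv beta in Ca, Cb.
  replace (fun x y => (x + -1) ^ 2 + y ^ 2) with (fun x y => (x - 1) ^ 2 + y ^ 2) in Ca
    by (do 2 (apply functional_extensionality; intro); ring).
  assert (Ce : continuous2 (fun x y => exp (h x y)))
    by (apply continuous2_comp; [intros; apply derivable_continuous_pt, derivable_pt_exp | auto]).
  unfold vortex_density, F_ratio, eps_weight, Rdiv.
  repeat apply continuous2_mult; try exact Hh.
  - apply (continuous2_comp Ropp); [intros; apply continuity_pt_opp, continuity_pt_id |].
    apply continuous2_mult; [apply continuous2_minus; [apply continuous2_mult |] |]; auto.
    apply continuous2_inv; [apply continuous2_plus; [apply continuous2_mult |]; auto |].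
    intros x y. apply Rgt_not_eq, vortex_F_ratio_denom_pos.
  - apply continuous2_inv.
    + apply continuous2_pow2, continuous2_plus; [apply continuous2_const |].
      apply continuous2_scal, continuous2_plus; apply continuous2_pow2;
        [apply continuous2_fst | apply continuous2_snd].
    + intros x y. apply pow_nonzero. nra.
Qed.

Lemma abs_vortex_density_le eps h M x y : (forall x y, Rabs (h x y) <= M) ->
  Rabs (vortex_density eps h x y) <= M * (lorentz eps x * lorentz eps y).
Proof.
  intros Hb. unfold vortex_density.
  pose proof (pow2_ge_0 (x - 1)). pose proof (pow2_ge_0 (x + 1)). pose proof (pow2_ge_0 y).
  pose proof (abs_neg_F_ratio_mul_le ((x - 1) ^ 2 + y ^ 2) ((x + 1) ^ 2 + y ^ 2) (h x y) M
                ltac:(lra) ltac:(lra) ltac:(nra) (Hb x y)).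
  pose proof (eps_weight_pos eps x y). pose proof (eps_weight_le_lorentz_tensor eps x y).
  rewrite Rabs_mult, (Rabs_right (eps_weight eps x y)) by lra.
  apply Rmult_le_compat; auto using Rabs_pos; lra.
Qed.

(* With [s = exp (- M)] the log peaks exceed [M] within distance [s] of the
   singular lines, which is how the bound [|h| <= M] enters the majorant. *)
Lemma plane_integral_vortex_density_le k eps h M : 0 <= k -> 0 < eps <= 1 ->
  continuous2 h -> (forall x y, Rabs (h x y) <= M) ->
  exists I, plane_integral (fun x y => k * vortex_density eps h x y) I /\ I <= k * (230000 / eps).
Proof.
  intros Hk He Hh Hb.
  assert (HM : 0 <= M) by (eapply Rle_trans; [apply Rabs_pos | apply (Hb 0 0)]).
  set (s := exp (- M)).
  assert (Hs : 0 < s <= 1).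
  { split; [apply exp_pos |]. unfold s. rewrite exp_Ropp, <- Rinv_1.
    pose proof (exp_ineq1_le M). apply Rinv_le_contravar; lra. }
  assert (HsM : - ln s = M) by (unfold s; rewrite ln_exp; ring).
  assert (Cd : continuous2 (fun x y => k * vortex_density eps h x y))
    by (apply continuous2_scal, continuous2_vortex_density, Hh).
  apply (plane_integral_of_dominated _ (fun x y => k * M * (lorentz eps x * lorentz eps y))
           (k * M * ((PI / eps) * (PI / eps)))); auto.
  - apply continuous2_scal, continuous2_tensor; apply lorentz_continuity.
  - intros x y. rewrite Rabs_mult, (Rabs_right k), Rmult_assoc by lra.
    apply Rmult_le_compat_l; [lra | apply abs_vortex_density_le, Hb].
  - intros r Hr. rewrite square_RInt_scal_tensor by (auto; apply lorentz_continuity).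
    destruct (RInt_lorentz_bounds eps r ltac:(lra) Hr) as [I1 I2].
    apply Rmult_le_compat_l; [nra |]. apply Rmult_le_compat; lra.
  - intros r Hr. eapply Rle_trans.
    + apply (square_RInt_le _ (fun x y => k * vortex_majorant s eps x y)); auto.
      * apply continuous2_scal, continuous2_vortex_majorant; lra.
      * intros x y. apply Rmult_le_compat_l; [lra |].
        apply neg_F_ratio_mul_weight_le_vortex_majorant; [lra | rewrite HsM; apply Hb].
    + rewrite square_RInt_scal by (auto; apply continuous2_vortex_majorant; lra).
      apply Rmult_le_compat_l; [lra | apply square_RInt_vortex_majorant_le; auto].
Qed.

Theorem mainTheorem10 :
  forall Rad : R, 0 < Rad ->
  exists C : R, 0 < C /\
    forall eps : R, 0 < eps <= 1 ->
    forall h L : R -> R -> R,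
      smooth_on_S2 h ->
      is_flat_laplacian h L ->
      hat_h_equation Rad eps h L ->
      exists I : R, L2S2_pairing_minus_lap h L I /\ I <= C * eps.
Proof.
  intros Rad HRad. exists (1840000 * Rad ^ 2). split; [nra |].
  intros eps He h L Hsm _ Heq.
  destruct (smooth_on_S2_bounded h Hsm) as [M Hb].
  unfold L2S2_pairing_minus_lap. rewrite (pairing_integrand_eq Rad eps h L Heq).
  destruct (plane_integral_vortex_density_le (8 * Rad ^ 2 * eps ^ 2) eps h M
              ltac:(nra) He (smooth_on_S2_continuous2 h Hsm) Hb) as [I [HI HIle]].
  exists I. split; [exact HI |].
  replace (1840000 * Rad ^ 2 * eps) with (8 * Rad ^ 2 * eps ^ 2 * (230000 / eps))
    by (field; lra).
  exact HIle.
Qed.
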